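(* Let $A, B, C \in \mathbb{Z}$ with $A > 0$, $C > 0$, $B < 0$, $2A + B > 0$ and $A + B + C > 0$, suppose the polynomial $Ax^2 + Bx + C$ is irreducible, and let $\beta$ be a real root of it. Then there exists $\alpha \in \mathbb{R}$ with $p_\beta(\alpha) = \infty$.
   Context: For $\beta, \alpha \in \mathbb{C}$, $p_\beta(\alpha) \in \mathbb{Z}_{\geq 0}\cup\{\infty\}$ is the number of polynomials $f \in \mathbb{Z}_{\geq 0}[x]$ (non-negative integer coefficients) with $f(\beta) = \alpha$. *)

From HB Require Import structures.
From mathcomp Require Import all_boot all_order all_algebra.
From mathcomp Require Import boolp classical_sets cardinality reals.
Set Implicit Arguments. Unset Strict Implicit. Unset Printing Implicit Defensive.
Import Order.TTheory GRing.Theory Num.Theory.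
Local Open Scope ring_scope.
Local Open Scope classical_set_scope.

Definition evalN {R : nzRingType} (f : {poly nat}) (beta : R) : R :=
  (map_poly (fun n : nat => n%:R) f).[beta].

(* The set of polynomials f with non-negative integer coefficients such that
   f(beta) = alpha; p_beta(alpha) is its cardinality. *)
Definition Pset {R : nzRingType} (beta alpha : R) : set {poly nat} :=
  [set f | evalN f beta = alpha].

Definition p_infinite {R : nzRingType} (beta alpha : R) : Prop :=
  infinite_set (Pset beta alpha).

Definition quadQ (A B C : int) : {poly rat} :=
  A%:~R *: 'X^2 + B%:~R *: 'X + (C%:~R)%:P.

(* Write B = -b and s = A + B + C > 0. The root satisfies
   (1 - beta) (A beta + A - b) = s. If W has non-negative integer coefficients
   and (1 - beta) W(beta) = v is a positive integer, then omega = W(beta) is a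
   fixed point of y |-> v + beta y, so all the polynomials v + X (v + X (... + X W))
   take the value omega at beta, while their values at 1 are pairwise distinct.
   Such a W, with v = (b + 1) s, is (A + s b - b) + X S_b, where S_0 = A and
   S_(m+1) = (2A - b + s m) + X S_m, because by induction
   (1 - beta) beta S_m(beta) = (m + 1) s - (1 - beta) (A - b + s m). *)

From HB Require Import structures.
From mathcomp Require Import all_boot all_order all_algebra.
From mathcomp Require Import boolp classical_sets cardinality reals.
From mathcomp Require Import zify ring.
Set Implicit Arguments. Unset Strict Implicit. Unset Printing Implicit Defensive.
Import Order.TTheory GRing.Theory Num.Theory.
Local Open Scope ring_scope.

Lemma evalN_cons (R : comNzRingType) (c : nat) (f : {poly nat}) (x : R) :
  evalN (c%:P + 'X * f) x = c%:R + x * evalN f x.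
Proof.
by rewrite /evalN rmorphD rmorphM /= map_polyX map_polyC hornerD hornerM hornerX hornerC.
Qed.

Section InfiniteFromFixedPoint.
Variables (R : comNzRingType) (x : R) (v : nat) (W : {poly nat}).
Hypothesis v_gt0 : (0 < v)%N.
Hypothesis subr1_evalN : (1 - x) * evalN W x = v%:R.

Let shift (f : {poly nat}) : {poly nat} := v%:P + 'X * f.

Lemma evalN_iter_shift n : evalN (iter n shift W) x = evalN W x.
Proof.
elim: n => [|n IHn] //=; rewrite evalN_cons IHn -subr1_evalN; ring.
Qed.

Lemma horner1_iter_shift n : (iter n shift W).[1%N] = (n * v + W.[1%N])%N.
Proof.
elim: n => [|n IHn] //=.
by rewrite hornerD hornerM hornerX hornerC IHn; lia.
Qed.

Lemma p_infinite_evalN : p_infinite x (evalN W x).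
Proof.
set iterates := fun n => iter n shift W.
have iterates_inj : injective iterates.
  move=> m n /(congr1 (horner^~ 1%N)); rewrite !horner1_iter_shift => /addIn.
  by move/eqP; rewrite eqn_mul2r eqn0Ngt v_gt0 => /eqP.
apply: (sub_infinite_set (A := iterates @` setT)).
  by move=> _ [n _ <-]; apply: evalN_iter_shift.
by rewrite (eq_finite_set (inj_card_eq (in2W iterates_inj))); exact: infinite_nat.
Qed.

End InfiniteFromFixedPoint.

Section RampPolynomial.
Variables (R : comNzRingType) (x : R) (A b s : nat).
Hypothesis b_le_2A : (b <= 2 * A)%N.
Hypothesis subr1_linear : (1 - x) * (A%:R * x + A%:R - b%:R) = s%:R.

Fixpoint ramp_poly (m : nat) : {poly nat} :=
  if m is m'.+1 then (2 * A - b + s * m')%N%:P + 'X * ramp_poly m' else A%:P.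

Lemma evalN_ramp_poly_invariant m :
  (1 - x) * x * evalN (ramp_poly m) x
  = m.+1%:R * s%:R - (1 - x) * (A%:R - b%:R + s%:R * m%:R).
Proof.
elim: m => [|m IHm] /=.
  by rewrite /evalN map_polyC hornerC -subr1_linear; ring.
have -> : (1 - x) * x * evalN ((2 * A - b + s * m)%N%:P + 'X * ramp_poly m) x
    = (1 - x) * x * (2 * A - b + s * m)%N%:R + x * ((1 - x) * x * evalN (ramp_poly m) x).
  by rewrite evalN_cons; ring.
rewrite IHm natrD natrB // !natrM -subr1_linear; ring.
Qed.

Lemma subr1_evalN_ramp m : (b <= A + s * m)%N ->
  (1 - x) * evalN ((A + s * m - b)%N%:P + 'X * ramp_poly m) x = (m.+1 * s)%:R.
Proof.
move=> b_le; rewrite evalN_cons mulrDr mulrA evalN_ramp_poly_invariant.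
by rewrite natrB // natrD !natrM; ring.
Qed.

End RampPolynomial.

Theorem lemma6 (R : realType) (A B C : int) (beta : R) :
  0 < A -> 0 < C -> B < 0 -> 0 < 2 * A + B -> 0 < A + B + C ->
  irreducible_poly (quadQ A B C) ->
  A%:~R * beta ^+ 2 + B%:~R * beta + C%:~R = 0 ->
  exists alpha : R, p_infinite beta alpha.
Proof.
case: A => [A|//] _; case: C => [C|//] _; case: B => [//|b'] _.
rewrite NegzE; set b := b'.+1 => b_lt_2A b_lt_AC _ root_beta.
have {b_lt_2A} b_le_2A : (b <= 2 * A)%N by lia.
set s := (A + C - b)%N.
have s_gt0 : (0 < s)%N by rewrite /s; lia.
have subr1_linear : (1 - beta) * (A%:R * beta + A%:R - b%:R) = s%:R.
  rewrite /s natrB ?natrD; last by lia.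
  by rewrite -[RHS]subr0 -[in RHS]root_beta; ring.
have b_le : (b <= A + s * b)%N by nia.
eexists; apply: (p_infinite_evalN _ (subr1_evalN_ramp b_le_2A subr1_linear b_le)).
by rewrite muln_gt0.
Qed.
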